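(* Let $X$ and $A$ be non-empty finite sets and let $\mathcal R$ be a resource over $(X,A)$. Then the family of norms $(\|\cdot\|^{(n)}_{\mathcal R})_{n\in\mathbb N}$, where $\|u\|^{(n)}_{\mathcal R}=\sup_{U\in\mathcal R}\|\phi_U^{(n)}(u)\|$ for $u\in M_n(\mathcal S_1^{A,X})$, is an operator space structure on the vector space $\mathcal S_1^{A,X}$.
   Context: $\mathcal S_1^{A,X}$ is the space of linear operators $\mathbb C^A\to\mathbb C^X$ with matrix units $\epsilon_{x,a}=e_xe_a^*$. A block operator isometry over $(X,A)$ is an isometry $U=(U_{a,x})_{a\in A,x\in X}:H^X\to K^A$ with entries $U_{a,x}\in\mathcal B(H,K)$ ($H,K$ Hilbert spaces, allowed to depend on $U$); $\phi_U:\mathcal S_1^{A,X}\to\mathcal B(H,K)$ is the linear map with $\phi_U(\epsilon_{x,a})=U_{a,x}$, and $\phi_U^{(n)}$ its entrywise $n$-th amplification. The direct sum of block operator isometries $U,U'$ is the block operator isometry with entries $U_{a,x}\oplus U'_{a,x}$. A resource over $(X,A)$ is a family $\mathcal R$ of block operator isometries over $(X,A)$ that is closed under finite direct sums and is separating: for every nonzero $S\in\mathcal S_1^{A,X}$ there is $U\in\mathcal R$ with $\phi_U(S)\neq0$. (An operator space structure is a family of norms on $M_n(\cdot)$ satisfying Ruan's axioms $\|v\oplus w\|=\max\{\|v\|,\|w\|\}$ and $\|\alpha v\beta\|\le\|\alpha\|\|v\|\|\beta\|$.) *)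

From HB Require Import structures.
From mathcomp Require Import all_boot all_order all_algebra.
From mathcomp Require Import all_classical all_reals ereal.
From mathcomp Require Import complex.

Set Implicit Arguments.
Unset Strict Implicit.
Unset Printing Implicit Defensive.

Import Order.TTheory GRing.Theory Num.Theory.
Local Open Scope ring_scope.
Local Open Scope classical_set_scope.

Section Defs.
Variable R : realType.
Local Notation C := (R[i]).

Definition sqn_of (V : Type) (ip : V -> V -> C) (x : V) : R := complex.Re (ip x x).

Definition ip_cauchy (V : zmodType) (ip : V -> V -> C) (u : nat -> V) :=
  forall e : R, 0 < e -> exists N : nat, forall m n : nat, (N <= m)%N -> (N <= n)%N ->
    Num.sqrt (sqn_of ip (u m - u n)) < e.

Definition ip_converges (V : zmodType) (ip : V -> V -> C) (u : nat -> V) (l : V) :=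
  forall e : R, 0 < e -> exists N : nat, forall n : nat, (N <= n)%N ->
    Num.sqrt (sqn_of ip (u n - l)) < e.

Record hilbert := Hilbert {
  hspace : lmodType C;
  hinner : hspace -> hspace -> C;
  hinnerDl : forall (c : C) (x y z : hspace),
      hinner (c *: x + y) z = c * hinner x z + hinner y z;
  hinnerC : forall x y : hspace, hinner x y = (hinner y x)^*;
  hinner_ge0 : forall x : hspace, 0 <= hinner x x;
  hinner_eq0 : forall x : hspace, hinner x x = 0 -> x = 0;
  hcomplete : forall u : nat -> hspace, ip_cauchy hinner u ->
      exists l : hspace, ip_converges hinner u l
}.

Definition sqn (H : hilbert) (x : hspace H) : R := sqn_of (@hinner H) x.

Section HSum.
Variables H H' : hilbert.

Definition hsum_inner (x y : (hspace H * hspace H')%type) : C :=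
  hinner x.1 y.1 + hinner x.2 y.2.

Lemma ReD (a b : C) : complex.Re (a + b) = complex.Re a + complex.Re b.
Proof. by case: a; case: b. Qed.

Lemma Re_ge0 (z : C) : 0 <= z -> 0 <= complex.Re z.
Proof. by rewrite lecE => /andP[]. Qed.

Lemma sqn_ge0 (K : hilbert) (x : hspace K) : 0 <= sqn x.
Proof. exact/Re_ge0/hinner_ge0. Qed.

Lemma hsum_innerDl (c : C) (x y z : (hspace H * hspace H')%type) :
  hsum_inner (c *: x + y) z = c * hsum_inner x z + hsum_inner y z.
Proof.
rewrite /hsum_inner /= !hinnerDl mulrDr -!addrA; congr (_ + _).
by rewrite addrCA.
Qed.

Lemma hsum_innerC (x y : (hspace H * hspace H')%type) :
  hsum_inner x y = (hsum_inner y x)^*.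
Proof. by rewrite /hsum_inner (hinnerC x.1) (hinnerC x.2) raddfD. Qed.

Lemma hsum_inner_ge0 x : 0 <= hsum_inner x x.
Proof. by rewrite /hsum_inner addr_ge0 // hinner_ge0. Qed.

Lemma hsum_inner_eq0 x : hsum_inner x x = 0 -> x = 0.
Proof.
case: x => x1 x2; rewrite /hsum_inner /= => /eqP.
rewrite paddr_eq0 ?hinner_ge0 // => /andP[/eqP/hinner_eq0 -> /eqP/hinner_eq0 ->].
by [].
Qed.

Lemma sqn_of_hsum x : sqn_of hsum_inner x = sqn x.1 + sqn x.2.
Proof. by rewrite /sqn_of /sqn /hsum_inner ReD. Qed.

Lemma sqrt_le_add (a b : R) : 0 <= a -> 0 <= b ->
  Num.sqrt (a + b) <= Num.sqrt a + Num.sqrt b.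
Proof.
move=> a0 b0.
have -> : Num.sqrt a + Num.sqrt b = Num.sqrt ((Num.sqrt a + Num.sqrt b) ^+ 2).
  by rewrite sqrtr_sqr ger0_norm // addr_ge0 // sqrtr_ge0.
apply: ler_wsqrtr; rewrite sqrrD !sqr_sqrtr // lerD2r -{1}[a]addr0 lerD2l.
by rewrite mulrn_wge0 // mulr_ge0 // sqrtr_ge0.
Qed.

Lemma sqrt_le_addl (a b : R) : 0 <= b -> Num.sqrt a <= Num.sqrt (a + b).
Proof. by move=> b0; apply: ler_wsqrtr; rewrite lerDl. Qed.

Lemma sqrt_le_addr (a b : R) : 0 <= a -> Num.sqrt b <= Num.sqrt (a + b).
Proof. by move=> a0; apply: ler_wsqrtr; rewrite lerDr. Qed.

Lemma hsum_complete (u : nat -> (hspace H * hspace H')%type) :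
  ip_cauchy hsum_inner u -> exists l, ip_converges hsum_inner u l.
Proof.
move=> cu.
have [l1 cv1] : exists l1, ip_converges (@hinner H) (fun n => (u n).1) l1.
  apply: hcomplete => e e0; have [N HN] := cu e e0; exists N => m n Nm Nn.
  apply: le_lt_trans (HN m n Nm Nn); rewrite sqn_of_hsum.
  exact/sqrt_le_addl/sqn_ge0.
have [l2 cv2] : exists l2, ip_converges (@hinner H') (fun n => (u n).2) l2.
  apply: hcomplete => e e0; have [N HN] := cu e e0; exists N => m n Nm Nn.
  apply: le_lt_trans (HN m n Nm Nn); rewrite sqn_of_hsum.
  exact/sqrt_le_addr/sqn_ge0.
exists (l1, l2) => e e0.
have e20 : 0 < e / 2 by rewrite divr_gt0.
have [N1 HN1] := cv1 _ e20; have [N2 HN2] := cv2 _ e20.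
exists (maxn N1 N2) => n; rewrite geq_max => /andP[n1 n2].
rewrite sqn_of_hsum; apply: le_lt_trans (sqrt_le_add (sqn_ge0 _) (sqn_ge0 _)) _.
rewrite [e]splitr; exact: ltrD (HN1 n n1) (HN2 n n2).
Qed.

Definition hsum : hilbert :=
  @Hilbert (hspace H * hspace H')%type hsum_inner hsum_innerDl hsum_innerC
    hsum_inner_ge0 hsum_inner_eq0 hsum_complete.

End HSum.

Lemma sqn_hsum (H H' : hilbert) (x : hspace (hsum H H')) :
  sqn x = sqn x.1 + sqn x.2.
Proof. exact: sqn_of_hsum. Qed.

Section BOI.
Variables X A : finType.

(* U = (U_{a,x}) : H^X -> K^A, entries linear maps H -> K, and U is an isometry
   for the Hilbert direct-sum norms on H^X and K^A. *)
Record boi := BOI {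
  bH : hilbert;
  bK : hilbert;
  bU : A -> X -> hspace bH -> hspace bK;
  bU_lin : forall a x (c : C) (h h' : hspace bH),
      bU a x (c *: h + h') = c *: bU a x h + bU a x h';
  bU_iso : forall xi : X -> hspace bH,
      \sum_(a : A) sqn (\sum_(x : X) bU a x (xi x)) = \sum_(x : X) sqn (xi x)
}.
Arguments bU [b] a x _.

Lemma fst_sum (V W : zmodType) (I : finType) (F : I -> (V * W)%type) :
  (\sum_i F i).1 = \sum_i (F i).1.
Proof. by apply: (big_morph fst) => //. Qed.

Lemma snd_sum (V W : zmodType) (I : finType) (F : I -> (V * W)%type) :
  (\sum_i F i).2 = \sum_i (F i).2.
Proof. by apply: (big_morph snd) => //. Qed.

Section BOISum.
Variables U V : boi.

Definition boi_sum_U (a : A) (x : X) (h : hspace (hsum (bH U) (bH V))) :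
    hspace (hsum (bK U) (bK V)) :=
  (bU (b:=U) a x h.1, bU (b:=V) a x h.2).

Lemma boi_sum_lin a x (c : C) (h h' : hspace (hsum (bH U) (bH V))) :
  boi_sum_U a x (c *: h + h') = c *: boi_sum_U a x h + boi_sum_U a x h'.
Proof. by rewrite /boi_sum_U /= !bU_lin. Qed.

Lemma boi_sum_iso (xi : X -> hspace (hsum (bH U) (bH V))) :
  \sum_(a : A) sqn (\sum_(x : X) boi_sum_U a x (xi x)) = \sum_(x : X) sqn (xi x).
Proof.
under eq_bigr do rewrite sqn_hsum fst_sum snd_sum /=.
rewrite big_split /= (bU_iso (b:=U) (fun x => (xi x).1)) (bU_iso (b:=V) (fun x => (xi x).2)).
by rewrite -big_split /=; apply: eq_bigr => x _; rewrite sqn_hsum.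
Qed.

Definition boi_sum : boi :=
  @BOI (hsum (bH U) (bH V)) (hsum (bK U) (bK V)) boi_sum_U boi_sum_lin boi_sum_iso.
End BOISum.

(* S_1^{A,X}: linear maps C^A -> C^X, stored by their matrix coefficients
   S (x, a) with respect to the matrix units eps_{x,a} = e_x e_a^*. *)
Definition S1 := {ffun X * A -> C}.

Definition phi (U : boi) (S : S1) : hspace (bH U) -> hspace (bK U) :=
  fun h => \sum_(x : X) \sum_(a : A) S (x, a) *: bU (b:=U) a x h.
Arguments phi : clear implicits.

(* resource: closed under (binary, hence finite) direct sums, and separating *)
Definition is_resource (Rs : boi -> Prop) : Prop :=
  (forall U V : boi, Rs U -> Rs V -> Rs (boi_sum U V)) /\
  (forall S : S1, S != 0 -> exists U : boi, Rs U /\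
      exists h : hspace (bH U), phi U S h != 0).

Definition ampl_norm (U : boi) (n : nat) (u : 'M[S1]_n) : \bar R :=
  ereal_sup [set (Num.sqrt (\sum_(i < n) sqn (\sum_(j < n) phi U (u i j) (xi j))))%:E
            | xi in [set xi : 'I_n -> hspace (bH U) | \sum_(j < n) sqn (xi j) <= 1]].

Definition res_norm (Rs : boi -> Prop) (n : nat) (u : 'M[S1]_n) : \bar R :=
  ereal_sup [set e : \bar R | exists2 U : boi, Rs U & e = ampl_norm U u].

End BOI.

Definition cabs2 (z : C) : R := complex.Re (z * z^*).
Definition cabs (z : C) : R := Num.sqrt (cabs2 z).

Definition cmx_norm (n m : nat) (alpha : 'M[C]_(n, m)) : \bar R :=
  ereal_sup [set (Num.sqrt (\sum_(i < n) cabs2 (\sum_(j < m) alpha i j * xi j)))%:E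
            | xi in [set xi : 'I_m -> C | \sum_(j < m) cabs2 (xi j) <= 1]].

Section OSS.
Variable V : lmodType C.

Definition mx_scale (n : nat) (c : C) (u : 'M[V]_n) : 'M[V]_n :=
  map_mx (fun v => c *: v) u.

Definition mx_mul3 (n m : nat) (alpha : 'M[C]_(n, m)) (v : 'M[V]_m)
    (beta : 'M[C]_(m, n)) : 'M[V]_n :=
  \matrix_(i < n, j < n) \sum_(k < m) \sum_(l < m) (alpha i k * beta l j) *: v k l.

Definition matrix_norms (N : forall n : nat, 'M[V]_n -> \bar R) : Prop :=
  [/\ (forall n (u : 'M[V]_n), (0 < n)%N -> N n u \is a fin_num),
      (forall n (u : 'M[V]_n), (0 < n)%N -> N n u = 0%E -> u = 0),
      (forall n (c : C) (u : 'M[V]_n), (0 < n)%N ->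
          N n (mx_scale c u) = ((cabs c)%:E * N n u)%E) &
      (forall n (u v : 'M[V]_n), (0 < n)%N -> (N n (u + v)%R <= N n u + N n v)%E)].

Definition ruan_axioms (N : forall n : nat, 'M[V]_n -> \bar R) : Prop :=
  (forall n m (v : 'M[V]_n) (w : 'M[V]_m), (0 < n)%N -> (0 < m)%N ->
      N (n + m)%N (block_mx v 0 0 w) = maxe (N n v) (N m w)) /\
  (forall n m (alpha : 'M[C]_(n, m)) (v : 'M[V]_m) (beta : 'M[C]_(m, n)),
      (0 < n)%N -> (0 < m)%N ->
      (N n (mx_mul3 alpha v beta) <= cmx_norm alpha * N m v * cmx_norm beta)%E).

Definition operator_space_structure (N : forall n : nat, 'M[V]_n -> \bar R) : Prop :=
  matrix_norms N /\ ruan_axioms N.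
End OSS.

End Defs.

(* It is finite because every entry U_{a,x}
   of an isometry is a contraction, so phi_U^(n)(u) is dominated by the l1-norm
   of the entries of u.  Operator norms of amplifications are norms and satisfy
   Ruan's axioms: a block-diagonal matrix acts separately on orthogonal summands,
   and phi_U^(n)(alpha v beta) = (alpha (x) 1) phi_U^(m)(v) (beta (x) 1) where
   ||alpha (x) 1|| <= ||alpha|| follows by expanding vectors of a Hilbert space
   along a Gram-Schmidt orthogonal family and applying Pythagoras.  All these
   properties survive the supremum over U in R.  R is non-empty because it
   separates the all-ones element of S_1^{A,X}, and separation also makes the
   supremum definite. *)

From HB Require Import structures.
From mathcomp Require Import all_boot all_order all_algebra.
From mathcomp Require Import all_classical all_reals ereal.
From mathcomp Require Import complex.
From mathcomp Require Import ring lra.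

Set Implicit Arguments.
Unset Strict Implicit.
Unset Printing Implicit Defensive.
Import Order.TTheory GRing.Theory Num.Theory.
Local Open Scope ring_scope.

Section ComplexModulus.
Variable R : realType.
Local Notation C := (R[i]).
Implicit Types (c d z : C) (t : R).

Lemma cabs2_ge0 c : 0 <= cabs2 c.
Proof. by case: c => a b; rewrite /cabs2 /=; nra. Qed.

Lemma cabs2_eq0 c : (cabs2 c == 0) = (c == 0).
Proof.
apply/eqP/eqP => [|->]; last by rewrite /cabs2 mul0r.
case: c => a b; rewrite /cabs2 /= => ab0.
by have [-> ->] : a = 0 /\ b = 0 by split; nra.
Qed.

Lemma cabs2M c d : cabs2 (c * d) = cabs2 c * cabs2 d.
Proof. by case: c => a b; case: d => a' b'; rewrite /cabs2 /=; ring. Qed.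

Lemma cabs2R t : cabs2 (t%:C)%C = t ^+ 2.
Proof. by rewrite /cabs2 /=; ring. Qed.

Lemma Re_mul_conj c z :
  complex.Im z = 0 -> complex.Re (c * c^* * z) = cabs2 c * complex.Re z.
Proof. by case: c => a b; case: z => x y /= ->; rewrite /cabs2 /=; ring. Qed.

Lemma Re_sum (I : Type) (r : seq I) (P : pred I) (F : I -> C) :
  complex.Re (\sum_(i <- r | P i) F i) = \sum_(i <- r | P i) complex.Re (F i).
Proof. by apply: (big_morph _ (@ReD R)). Qed.

Lemma ReJ c : complex.Re c^* = complex.Re c.
Proof. by case: c. Qed.

Lemma Re_realM t c : complex.Re ((t%:C)%C * c) = t * complex.Re c.
Proof. by case: c => a b /=; ring. Qed.

Lemma conj_real t : ((t%:C)%C)^* = (t%:C)%C :> C.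
Proof. by apply/eqP; rewrite eq_complex /= oppr0 !eqxx. Qed.

Lemma cabs_ge0 c : 0 <= cabs c.
Proof. exact: sqrtr_ge0. Qed.

Lemma cabs_sqr c : cabs c ^+ 2 = cabs2 c.
Proof. by rewrite sqr_sqrtr // cabs2_ge0. Qed.

Lemma cabs_eq0 c : (cabs c == 0) = (c == 0).
Proof. by rewrite -sqrf_eq0 cabs_sqr cabs2_eq0. Qed.

Lemma cabsM c d : cabs (c * d) = cabs c * cabs d.
Proof. by rewrite /cabs cabs2M sqrtrM // cabs2_ge0. Qed.

Lemma cabs1 : cabs 1 = 1 :> R.
Proof. by rewrite /cabs /cabs2 conjC1 mulr1 sqrtr1. Qed.

Lemma cabs0 : cabs 0 = 0 :> R.
Proof. by rewrite /cabs /cabs2 mul0r sqrtr0. Qed.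

Lemma cabsV c : cabs c^-1 = (cabs c)^-1.
Proof.
have [->|c0] := eqVneq c 0; first by rewrite invr0 cabs0 invr0.
apply: (@mulfI _ (cabs c)); first by rewrite cabs_eq0.
by rewrite -cabsM mulfV // divff ?cabs1 // cabs_eq0.
Qed.

End ComplexModulus.

Section HypLinear.
Variable R : realType.
Local Notation C := (R[i]).
Variables (V1 V2 : lmodType C) (f : V1 -> V2).
Hypothesis f_lin : forall (c : C) v w, f (c *: v + w) = c *: f v + f w.

Lemma lin0 : f 0 = 0.
Proof.
by apply: (@addrI _ (f 0)); rewrite addr0 -{1}[f 0]scale1r -f_lin scale1r addr0.
Qed.

Lemma linZ c v : f (c *: v) = c *: f v.
Proof. by rewrite -[c *: v]addr0 f_lin lin0 addr0. Qed.

Lemma linD v w : f (v + w) = f v + f w.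
Proof. by rewrite -[v in LHS]scale1r f_lin scale1r. Qed.

Lemma lin_sum (I : Type) (r : seq I) (P : pred I) (F : I -> V1) :
  f (\sum_(i <- r | P i) F i) = \sum_(i <- r | P i) f (F i).
Proof. exact: (big_morph f linD lin0). Qed.

End HypLinear.

(* A [hilbert] space without completeness: the spaces H^n and C on which the
   amplifications act only need their inner product. *)
Record preHilbert (R : realType) (V : lmodType R[i]) := PreHilbert {
  pinner : V -> V -> R[i];
  pinner_linl : forall (c : R[i]) (x y z : V),
      pinner (c *: x + y) z = c * pinner x z + pinner y z;
  pinnerC : forall x y : V, pinner x y = (pinner y x)^*;
  pinner_ge0 : forall x : V, 0 <= pinner x x;
  pinner_eq0 : forall x : V, pinner x x = 0 -> x = 0 }.

Arguments pinner_linl {R V} p c x y z.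
Arguments pinnerC {R V} p x y.
Arguments pinner_ge0 {R V} p x.
Arguments pinner_eq0 {R V} p {x}.

Section PreHilbert.
Variable R : realType.
Local Notation C := (R[i]).
Variables (V : lmodType C) (P : preHilbert V).
Local Notation "<< x , y >>" := (pinner P x y).
Implicit Types (x y z : V) (c : C).

Definition psqn x : R := complex.Re << x, x >>.
Definition pnorm x : R := Num.sqrt (psqn x).

Lemma pinnerl_lin z :
  forall c x y, (<< c *: x + y, z >> : C^o) = c *: << x, z >> + << y, z >>.
Proof. by move=> c x y; rewrite pinner_linl. Qed.

Lemma pinner0l z : << 0, z >> = 0.
Proof. exact: lin0 (pinnerl_lin z). Qed.

Lemma pinnerDl x y z : << x + y, z >> = << x, z >> + << y, z >>.
Proof. exact: (linD (pinnerl_lin z) x y). Qed.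

Lemma pinnerZl c x z : << c *: x, z >> = c * << x, z >>.
Proof. exact: (linZ (pinnerl_lin z) c x). Qed.

Lemma pinnerBl x y z : << x - y, z >> = << x, z >> - << y, z >>.
Proof. by rewrite pinnerDl -scaleN1r pinnerZl mulN1r. Qed.

Lemma pinner_suml (I : Type) (r : seq I) (Q : pred I) (F : I -> V) z :
  << \sum_(i <- r | Q i) F i, z >> = \sum_(i <- r | Q i) << F i, z >>.
Proof. exact: (lin_sum (pinnerl_lin z)). Qed.

Lemma pinner0r z : << z, 0 >> = 0.
Proof. by rewrite pinnerC pinner0l conjC0. Qed.

Lemma pinnerZr c x z : << z, c *: x >> = c^* * << z, x >>.
Proof. by rewrite !(pinnerC P z) pinnerZl rmorphM. Qed.

Lemma pinner_sumr (I : Type) (r : seq I) (Q : pred I) (F : I -> V) z :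
  << z, \sum_(i <- r | Q i) F i >> = \sum_(i <- r | Q i) << z, F i >>.
Proof.
rewrite pinnerC pinner_suml rmorph_sum.
by apply: eq_bigr => i _; rewrite [in RHS]pinnerC.
Qed.

Lemma Im_pinnerxx x : complex.Im << x, x >> = 0.
Proof. by have := pinner_ge0 P x; rewrite lecE /= => /andP[/eqP <-]. Qed.

Lemma psqn_ge0 x : 0 <= psqn x.
Proof. exact/Re_ge0/pinner_ge0. Qed.

Lemma psqn_eq0 x : psqn x = 0 -> x = 0.
Proof.
move=> x0; apply: (pinner_eq0 P); apply/eqP.
by rewrite eq_complex /= Im_pinnerxx -/(psqn x) x0 !eqxx.
Qed.

Lemma psqn0 : psqn 0 = 0.
Proof. by rewrite /psqn pinner0l. Qed.

Lemma psqnZ c x : psqn (c *: x) = cabs2 c * psqn x.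
Proof. by rewrite /psqn pinnerZl pinnerZr mulrA Re_mul_conj // Im_pinnerxx. Qed.

Lemma pnorm_ge0 x : 0 <= pnorm x.
Proof. exact: sqrtr_ge0. Qed.

Lemma pnorm_sqr x : pnorm x ^+ 2 = psqn x.
Proof. by rewrite sqr_sqrtr // psqn_ge0. Qed.

Lemma pnormZ c x : pnorm (c *: x) = cabs c * pnorm x.
Proof. by rewrite /pnorm psqnZ sqrtrM // cabs2_ge0. Qed.

Lemma psqnD x y : psqn (x + y) = psqn x + 2 * complex.Re << x, y >> + psqn y.
Proof.
rewrite /psqn pinnerDl (pinnerC P y (x + y)) (pinnerC P x (x + y)) !pinnerDl.
by rewrite !rmorphD !ReD !ReJ (pinnerC P y x) ReJ; ring.
Qed.

Lemma cauchy_schwarz x y : complex.Re << x, y >> ^+ 2 <= psqn x * psqn y.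
Proof.
have [y0|y_neq0] := eqVneq (psqn y) 0.
  by rewrite (psqn_eq0 y0) pinner0r psqn0 mulr0 expr0n.
have y_gt0 : 0 < psqn y by rewrite lt_def y_neq0 psqn_ge0.
set r := complex.Re << x, y >>; set t := r / psqn y.
(* [0 <= |x - t y|^2] for the optimal [t = Re <x, y> / |y|^2] *)
have := psqn_ge0 (x + (- t)%:C%C *: y).
rewrite psqnD psqnZ cabs2R pinnerZr conj_real Re_realM -/r.
have -> : psqn x + 2 * (- t * r) + (- t) ^+ 2 * psqn y = psqn x - r ^+ 2 / psqn y.
  by rewrite /t; field; rewrite y_neq0.
by rewrite subr_ge0 ler_pdivrMr.
Qed.

Lemma Re_pinner_le x y : complex.Re << x, y >> <= pnorm x * pnorm y.
Proof.
apply: le_trans (ler_norm _) _.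
by rewrite -sqrtrM ?psqn_ge0 // -sqrtr_sqr ler_wsqrtr // cauchy_schwarz.
Qed.

Lemma pnormD x y : pnorm (x + y) <= pnorm x + pnorm y.
Proof.
have xy_ge0 : 0 <= pnorm x + pnorm y by rewrite addr_ge0 ?pnorm_ge0.
rewrite -(ger0_norm xy_ge0) -sqrtr_sqr ler_wsqrtr // psqnD sqrrD !pnorm_sqr.
by have := Re_pinner_le x y; lra.
Qed.

Lemma pnorm_sum (I : Type) (r : seq I) (Q : pred I) (F : I -> V) :
  pnorm (\sum_(i <- r | Q i) F i) <= \sum_(i <- r | Q i) pnorm (F i).
Proof.
elim/big_ind2: _ => [|a b c d ab cd|//]; first by rewrite /pnorm psqn0 sqrtr0.
exact: le_trans (pnormD _ _) (lerD ab cd).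
Qed.

End PreHilbert.

Section Families.
Variable R : realType.
Local Notation C := (R[i]).
Variables (V : lmodType C) (P : preHilbert V) (n : nat).
Implicit Types f g h : 'I_n -> V.

Definition fam_inner f g : C := \sum_i pinner P (f i) (g i).

Lemma fam_inner_linl (c : C) f g h :
  fam_inner (c *: f + g) h = c * fam_inner f h + fam_inner g h.
Proof.
rewrite /fam_inner mulr_sumr -big_split; apply: eq_bigr => i _.
exact: pinner_linl.
Qed.

Lemma fam_innerC f g : fam_inner f g = (fam_inner g f)^*.
Proof. by rewrite /fam_inner rmorph_sum; apply: eq_bigr => i _; apply: pinnerC. Qed.

Lemma fam_inner_ge0 f : 0 <= fam_inner f f.
Proof. by apply: sumr_ge0 => i _; apply: pinner_ge0. Qed.

Lemma fam_inner_eq0 f : fam_inner f f = 0 -> f = 0.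
Proof.
move/eqP; rewrite psumr_eq0 => [/allP f0|i _]; last exact: pinner_ge0.
by apply: funext => i; apply: (pinner_eq0 P (x := f i)); apply/eqP/f0/mem_index_enum.
Qed.

Definition famPH : preHilbert ('I_n -> V) :=
  PreHilbert fam_inner_linl fam_innerC fam_inner_ge0 fam_inner_eq0.

Definition fsqn f : R := \sum_i psqn P (f i).
Definition fnorm f : R := Num.sqrt (fsqn f).

Lemma psqn_famPH f : psqn famPH f = fsqn f.
Proof. exact: Re_sum. Qed.

Lemma fsqn_ge0 f : 0 <= fsqn f.
Proof. by rewrite -psqn_famPH psqn_ge0. Qed.

Lemma fsqn_eq0 f : fsqn f = 0 -> f = 0.
Proof. by rewrite -psqn_famPH => /psqn_eq0. Qed.

Lemma fsqn0 : fsqn 0 = 0.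
Proof. by rewrite -psqn_famPH psqn0. Qed.

Lemma fsqnZ (c : C) f : fsqn (c *: f) = cabs2 c * fsqn f.
Proof. by rewrite -!psqn_famPH psqnZ. Qed.

Lemma psqn_le_fsqn f i : psqn P (f i) <= fsqn f.
Proof. by rewrite /fsqn (bigD1 i) //= lerDl sumr_ge0 // => j _; apply: psqn_ge0. Qed.

Lemma fnorm_ge0 f : 0 <= fnorm f.
Proof. exact: sqrtr_ge0. Qed.

Lemma fnormZ (c : C) f : fnorm (c *: f) = cabs c * fnorm f.
Proof. by rewrite /fnorm fsqnZ sqrtrM ?cabs2_ge0. Qed.

Lemma fnormD f g : fnorm (f + g) <= fnorm f + fnorm g.
Proof. by rewrite /fnorm -!psqn_famPH; apply: pnormD. Qed.

Lemma fnorm_le_sum f : fnorm f <= \sum_i pnorm P (f i).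
Proof.
rewrite /fnorm /fsqn; elim: (index_enum _) => [|i s IH]; first by rewrite !big_nil sqrtr0.
rewrite !big_cons; apply: le_trans (sqrt_le_add (psqn_ge0 _ _) _) _.
  by rewrite sumr_ge0 // => j _; apply: psqn_ge0.
by rewrite lerD2l.
Qed.

End Families.
Arguments fsqn {R V} P {n} f.
Arguments fnorm {R V} P {n} f.

Section OperatorNorm.
Variable R : realType.
Local Notation C := (R[i]).

Definition opnorm (W1 W2 : Type) (N1 : W1 -> R) (N2 : W2 -> R) (F : W1 -> W2) : \bar R :=
  ereal_sup [set (Num.sqrt (N2 (F w)))%:E | w in [set w | N1 w <= 1]].

Definition mxapply (V1 : Type) (V2 : zmodType) (p q : nat)
    (L : 'I_p -> 'I_q -> V1 -> V2) (xi : 'I_q -> V1) : 'I_p -> V2 :=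
  fun i => \sum_j L i j (xi j).

Variables (V1 V2 : lmodType C) (P1 : preHilbert V1) (P2 : preHilbert V2) (p q : nat).
Variable L : 'I_p -> 'I_q -> V1 -> V2.
Hypothesis L_lin : forall i j (c : C) v w, L i j (c *: v + w) = c *: L i j v + L i j w.

Local Notation F := (mxapply L).
Local Notation op := (opnorm (fsqn P1) (fsqn P2) (mxapply L)).

Lemma mxapply_lin (c : C) xi zeta : F (c *: xi + zeta) = c *: F xi + F zeta.
Proof.
apply: funext => i; rewrite /mxapply.
transitivity (c *: \sum_j L i j (xi j) + \sum_j L i j (zeta j)); last by [].
by rewrite scaler_sumr -big_split; apply: eq_bigr => j _; apply: L_lin.
Qed.

Lemma mxapply0 : F 0 = 0.
Proof. exact: lin0 mxapply_lin. Qed.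

Lemma opnorm_lb xi : fsqn P1 xi <= 1 -> ((fnorm P2 (F xi))%:E <= op)%E.
Proof. by move=> xi_le1; apply: ereal_sup_ubound; exists xi. Qed.

Lemma opnorm_ub (M : R) : (forall xi, fsqn P1 xi <= 1 -> fnorm P2 (F xi) <= M) ->
  (op <= M%:E)%E.
Proof. by move=> FM; apply: ge_ereal_sup => _ [xi xi_le1 <-]; rewrite lee_fin FM. Qed.

Lemma opnorm_ge0 : (0 <= op)%E.
Proof.
by apply: le_trans (opnorm_lb (xi := 0) _); rewrite ?lee_fin ?fnorm_ge0 ?fsqn0.
Qed.

Lemma fnorm_mxapply_le (k : 'I_p -> 'I_q -> R) : (forall i j, 0 <= k i j) ->
  (forall i j v, pnorm P2 (L i j v) <= k i j * pnorm P1 v) ->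
  forall xi, fnorm P2 (F xi) <= (\sum_i \sum_j k i j) * fnorm P1 xi.
Proof.
move=> k_ge0 Lk xi; apply: le_trans (fnorm_le_sum _ _) _.
rewrite mulr_suml; apply: ler_sum => i _; apply: le_trans (pnorm_sum _ _ _ _) _.
rewrite mulr_suml; apply: ler_sum => j _; apply: le_trans (Lk _ _ _) _.
by rewrite ler_wpM2l // ler_wsqrtr // psqn_le_fsqn.
Qed.

Lemma opnorm_le_sum (k : 'I_p -> 'I_q -> R) : (forall i j, 0 <= k i j) ->
  (forall i j v, pnorm P2 (L i j v) <= k i j * pnorm P1 v) ->
  (op <= (\sum_i \sum_j k i j)%:E)%E.
Proof.
move=> k_ge0 Lk; apply: opnorm_ub => xi xi_le1.
apply: le_trans (fnorm_mxapply_le k_ge0 Lk xi) _.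
apply: ler_piMr; first by apply: sumr_ge0 => i _; apply: sumr_ge0.
by rewrite /fnorm -sqrtr1 ler_wsqrtr.
Qed.

Lemma opnorm_fin_num (k : 'I_p -> 'I_q -> R) : (forall i j, 0 <= k i j) ->
  (forall i j v, pnorm P2 (L i j v) <= k i j * pnorm P1 v) -> op \is a fin_num.
Proof.
move=> k_ge0 Lk; rewrite ge0_fin_numE ?opnorm_ge0 //.
exact: le_lt_trans (opnorm_le_sum k_ge0 Lk) (ltry _).
Qed.

Hypothesis op_fin : op \is a fin_num.

Lemma fine_opnorm_ge0 : 0 <= fine op.
Proof. exact/fine_ge0/opnorm_ge0. Qed.

Lemma fnorm_mxapply_opnorm xi : fnorm P2 (F xi) <= fine op * fnorm P1 xi.
Proof.
have [xi0|xi_neq0] := eqVneq (fsqn P1 xi) 0.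
  by rewrite (fsqn_eq0 xi0) mxapply0 /fnorm !fsqn0 sqrtr0 mulr0.
have s_gt0 : 0 < fnorm P1 xi by rewrite sqrtr_gt0 lt_def xi_neq0 fsqn_ge0.
have unit_xi : fsqn P1 ((fnorm P1 xi)^-1%:C%C *: xi) <= 1.
  rewrite fsqnZ cabs2R -[fsqn P1 xi]sqr_sqrtr ?fsqn_ge0 // -exprMn.
  by rewrite mulVf ?gt_eqF ?expr1n.
have := opnorm_lb unit_xi.
rewrite -[_ *: xi]addr0 mxapply_lin mxapply0 addr0 fnormZ /cabs cabs2R sqrtr_sqr.
rewrite ger0_norm ?invr_ge0 ?fnorm_ge0 // -[X in (_ <= X)%E]fineK // lee_fin.
by rewrite ler_pdivrMl // mulrC.
Qed.

Lemma fsqn_mxapply_opnorm xi : fsqn P2 (F xi) <= fine op ^+ 2 * fsqn P1 xi.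
Proof.
rewrite -(sqr_sqrtr (fsqn_ge0 P2 _)) -(sqr_sqrtr (fsqn_ge0 P1 xi)) -exprMn.
by rewrite lerXn2r ?nnegrE ?mulr_ge0 ?fine_opnorm_ge0 ?fnorm_ge0 ?fnorm_mxapply_opnorm.
Qed.

Lemma fnorm_mxapply_unit xi : fsqn P1 xi <= 1 -> fnorm P2 (F xi) <= fine op.
Proof.
move=> xi_le1; apply: le_trans (fnorm_mxapply_opnorm xi) _.
by apply: ler_piMr; rewrite ?fine_opnorm_ge0 // /fnorm -sqrtr1 ler_wsqrtr.
Qed.

End OperatorNorm.

Section FamilyJoin.
Variables (T : Type) (n m : nat).

Definition fam_join (f : 'I_n -> T) (g : 'I_m -> T) : 'I_(n + m) -> T :=
  fun k => match fintype.split k with inl i => f i | inr j => g j end.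

Lemma fam_join_lshift f g i : fam_join f g (lshift m i) = f i.
Proof. by rewrite /fam_join (unsplitK (inl _ i)). Qed.

Lemma fam_join_rshift f g j : fam_join f g (rshift n j) = g j.
Proof. by rewrite /fam_join (unsplitK (inr _ j)). Qed.

Lemma fam_joinE (h : 'I_(n + m) -> T) :
  fam_join (h \o @lshift n m) (h \o @rshift n m) = h.
Proof.
apply: funext => k; rewrite /fam_join.
by case: (fintype.split k) (fintype.splitK k) => i <-.
Qed.

End FamilyJoin.

Lemma fsqn_fam_join (R : realType) (V : lmodType R[i]) (P : preHilbert V) n m
    (f : 'I_n -> V) (g : 'I_m -> V) :
  fsqn P (fam_join f g) = fsqn P f + fsqn P g.
Proof.
rewrite /fsqn big_split_ord; congr (_ + _); apply: eq_bigr => i _.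
  by rewrite fam_join_lshift.
by rewrite fam_join_rshift.
Qed.

Section GramSchmidt.
Variable R : realType.
Local Notation C := (R[i]).
Variables (V : lmodType C) (P : preHilbert V).
Local Notation "<< x , y >>" := (pinner P x y).

Definition orthogonal_upto (m : nat) (e : nat -> V) :=
  forall k l, (k < m)%N -> (l < m)%N -> k != l -> << e k, e l >> = 0.

Definition gs_coef (e : nat -> V) (v : V) (k : nat) : C :=
  << v, e k >> / << e k, e k >>.

Definition gs_residual (m : nat) (e : nat -> V) (v : V) : V :=
  v - \sum_(k < m) gs_coef e v k *: e k.

Lemma gs_residual_orth m e v : orthogonal_upto m e ->
  forall l, (l < m)%N -> << gs_residual m e v, e l >> = 0.
Proof.
move=> e_orth l lm; rewrite pinnerBl pinner_suml (bigD1 (Ordinal lm)) //=.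
rewrite big1 => [|k kl]; last first.
  by rewrite pinnerZl e_orth ?mulr0 //; apply: contra_neq kl => kl; apply: val_inj.
rewrite addr0 pinnerZl /gs_coef.
have [el0|el_neq0] := eqVneq << e l, e l >> 0.
  by rewrite (pinner_eq0 P el0) !pinner0r mulr0 subr0.
by rewrite divfK // subrr.
Qed.

Lemma gram_schmidt (eta : nat -> V) (m : nat) :
  exists (e : nat -> V) (c : nat -> nat -> C), orthogonal_upto m e /\
    forall j, (j < m)%N -> eta j = \sum_(k < m) c j k *: e k.
Proof.
elim: m => [|m [e [c [e_orth eta_e]]]]; first by exists (fun _ => 0), (fun _ _ => 0).
pose r := gs_residual m e (eta m).
have r_orth := gs_residual_orth (eta m) e_orth.
exists (fun k => if k == m then r else e k).
exists (fun j k => if k == m then (if j == m then 1 else 0)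
                 else if j == m then gs_coef e (eta m) k else c j k).
split=> [k l|j].
  rewrite !ltnS => km lm kl.
  case: ifP => [/eqP k_m|/negbT km']; case: ifP => [/eqP l_m|/negbT lm'].
  - by move: kl; rewrite k_m l_m eqxx.
  - by rewrite r_orth // ltn_neqAle lm' lm.
  - by rewrite pinnerC r_orth ?conjC0 // ltn_neqAle km' km.
  - by rewrite e_orth // ltn_neqAle ?km' ?lm'.
rewrite ltnS => jm; rewrite big_ord_recr /= eqxx.
under eq_bigr => k _ do rewrite ltn_eqF //.
case: (eqVneq j m) => [->|jm'].
  by rewrite scale1r /r /gs_residual addrC subrK.
by rewrite scale0r addr0 eta_e // ltn_neqAle jm'.
Qed.

Lemma psqn_orth_sum (d : nat) (e : nat -> V) (z : nat -> C) : orthogonal_upto d e ->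
  psqn P (\sum_(k < d) z k *: e k) = \sum_(k < d) cabs2 (z k) * psqn P (e k).
Proof.
move=> e_orth; rewrite /psqn pinner_suml Re_sum; apply: eq_bigr => k _.
rewrite pinnerZl pinner_sumr (bigD1 k) //= big1 ?addr0 => [|l lk]; last first.
  by rewrite pinnerZr e_orth ?mulr0 //; apply: contra_neq lk => kl; apply: val_inj.
by rewrite pinnerZr mulrA Re_mul_conj // Im_pinnerxx.
Qed.

Definition cmx_act (p q : nat) (g : 'M[C]_(p, q)) (eta : 'I_q -> V) : 'I_p -> V :=
  fun i => \sum_j g i j *: eta j.

(* Writing [eta j = \sum_k c j k *: e k] with [e] orthogonal, Pythagoras reduces the
   bound to the scalar vectors [c _ k], one [k] at a time. *)
Lemma fsqn_cmx_act_le (p q : nat) (g : 'M[C]_(p, q)) (N : R) : 0 <= N ->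
  (forall z : 'I_q -> C, \sum_i cabs2 (\sum_j g i j * z j) <= N * \sum_j cabs2 (z j)) ->
  forall eta : 'I_q -> V, fsqn P (cmx_act g eta) <= N * fsqn P eta.
Proof.
move=> N_ge0 gN eta.
have [e [c [e_orth eta_e]]] := gram_schmidt (fun k => oapp eta 0 (insub k)) q.
have {}eta_e (j : 'I_q) : eta j = \sum_(k < q) c j k *: e k.
  by have := eta_e j (ltn_ord j); rewrite /= valK.
have act_e i : cmx_act g eta i = \sum_(k < q) (\sum_j g i j * c j k) *: e k.
  rewrite /cmx_act; under eq_bigr => j _ do rewrite eta_e scaler_sumr.
  rewrite exchange_big /=; apply: eq_bigr => k _.
  by rewrite scaler_suml; apply: eq_bigr => j _; rewrite scalerA.
rewrite /fsqn.
under eq_bigr => i _ do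
  rewrite act_e (psqn_orth_sum (fun k => \sum_j g i j * c j k) e_orth).
under [X in _ <= N * X]eq_bigr => j _ do rewrite eta_e (psqn_orth_sum (c j) e_orth).
rewrite exchange_big [X in _ <= N * X]exchange_big /= mulr_sumr.
apply: ler_sum => k _; rewrite -mulr_suml -[in leRHS]mulr_suml mulrA.
by rewrite ler_wpM2r ?psqn_ge0 // gN.
Qed.

End GramSchmidt.

Section ScalarMatrices.
Variable R : realType.
Local Notation C := (R[i]).

Definition complex_inner (z w : C^o) : C := z * w^*.

Lemma complex_inner_linl (c : C) (x y z : C^o) :
  complex_inner (c *: x + y) z = c * complex_inner x z + complex_inner y z.
Proof. by rewrite /complex_inner mulrDl mulrA. Qed.

Lemma complex_innerC (x y : C^o) : complex_inner x y = (complex_inner y x)^*.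
Proof.
by case: x => a b; case: y => c d; rewrite /complex_inner /=; congr Complex; ring.
Qed.

Lemma complex_inner_ge0 (x : C^o) : 0 <= complex_inner x x.
Proof. exact: mul_conjC_ge0. Qed.

Lemma complex_inner_eq0 (x : C^o) : complex_inner x x = 0 -> x = 0.
Proof. by move/eqP; rewrite mul_conjC_eq0 => /eqP. Qed.

Definition complexPH : preHilbert C^o :=
  PreHilbert complex_inner_linl complex_innerC complex_inner_ge0 complex_inner_eq0.

Variables (p q : nat) (g : 'M[C]_(p, q)).

Definition cmx_entry (i : 'I_p) (j : 'I_q) (z : C^o) : C^o := g i j * z.

Lemma cmx_entry_lin i j (c : C) (v w : C^o) :
  cmx_entry i j (c *: v + w) = c *: cmx_entry i j v + cmx_entry i j w.
Proof. by rewrite /cmx_entry mulrDr mulrCA. Qed.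

Lemma cmx_normE :
  cmx_norm g = opnorm (fsqn complexPH) (fsqn complexPH) (mxapply cmx_entry).
Proof. by []. Qed.

Lemma cmx_norm_fin_num : cmx_norm g \is a fin_num.
Proof.
rewrite cmx_normE; apply: (opnorm_fin_num (k := fun i j => cabs (g i j))) => i j.
  exact: cabs_ge0.
by move=> v; rewrite -[cmx_entry i j v]/(g i j *: v) pnormZ.
Qed.

Lemma fine_cmx_norm_ge0 : 0 <= fine (cmx_norm g).
Proof. by apply/fine_ge0; rewrite cmx_normE opnorm_ge0. Qed.

Lemma fnorm_cmx_act_le (V : lmodType C) (P : preHilbert V) (eta : 'I_q -> V) :
  fnorm P (cmx_act g eta) <= fine (cmx_norm g) * fnorm P eta.
Proof.
have scalar_bound (z : 'I_q -> C) :
    \sum_i cabs2 (\sum_j g i j * z j) <= fine (cmx_norm g) ^+ 2 * \sum_j cabs2 (z j).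
  have g_fin := cmx_norm_fin_num; rewrite cmx_normE in g_fin *.
  exact: (fsqn_mxapply_opnorm cmx_entry_lin g_fin z).
have act_le := fsqn_cmx_act_le P (sqr_ge0 _) scalar_bound eta.
rewrite /fnorm -(ger0_norm fine_cmx_norm_ge0) -sqrtr_sqr -sqrtrM ?sqr_ge0 //.
exact: ler_wsqrtr.
Qed.

End ScalarMatrices.

Definition hilbertPH (R : realType) (H : hilbert R) : preHilbert (hspace H) :=
  PreHilbert (@hinnerDl R H) (@hinnerC R H) (@hinner_ge0 R H) (@hinner_eq0 R H).

Section BlockIsometry.
Variables (R : realType) (X A : finType).
Local Notation C := (R[i]).
Local Notation S := (S1 R X A).
Variable U : boi R X A.
Local Notation H := (hspace (bH U)).
Local Notation PH := (hilbertPH (bH U)).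
Local Notation PK := (hilbertPH (bK U)).

Lemma bU_contraction a x (h : H) : sqn (bU a x h) <= sqn h.
Proof.
pose xi x' := if x' == x then h else 0.
have col a' : \sum_x' bU a' x' (xi x') = bU a' x h.
  rewrite (bigD1 x) //= /xi eqxx big1 ?addr0 // => y /negbTE ->.
  exact: lin0 (bU_lin (b := U) a' y).
have xi_sqn : \sum_x' sqn (xi x') = sqn h.
  rewrite (bigD1 x) //= /xi eqxx big1 ?addr0 // => y /negbTE ->.
  exact: (psqn0 PH).
have := bU_iso xi; under eq_bigr => a' _ do rewrite col.
rewrite xi_sqn => <-; rewrite (bigD1 a) //= lerDl.
by apply: sumr_ge0 => b _; apply: sqn_ge0.
Qed.

Lemma phi_lin (T : S) (c : C) (v w : H) : phi T (c *: v + w) = c *: phi T v + phi T w.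
Proof.
rewrite /phi scaler_sumr -big_split; apply: eq_bigr => x _ /=.
rewrite scaler_sumr -big_split; apply: eq_bigr => a _ /=.
by rewrite bU_lin scalerDr !scalerA mulrC.
Qed.

Lemma phiZ (c : C) (T : S) (h : H) : phi (c *: T) h = c *: phi T h.
Proof.
rewrite /phi scaler_sumr; apply: eq_bigr => x _.
by rewrite scaler_sumr; apply: eq_bigr => a _; rewrite ffunE scalerA.
Qed.

Lemma phiD (T T' : S) (h : H) : phi (T + T') h = phi T h + phi T' h.
Proof.
rewrite /phi -big_split; apply: eq_bigr => x _.
by rewrite -big_split; apply: eq_bigr => a _; rewrite ffunE scalerDl.
Qed.

Lemma phi0 (h : H) : phi (0 : S) h = 0.
Proof. by rewrite /phi big1 // => x _; rewrite big1 // => a _; rewrite ffunE scale0r. Qed.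

Lemma phi_sum (I : Type) (r : seq I) (P : pred I) (F : I -> S) (h : H) :
  phi (\sum_(i <- r | P i) F i) h = \sum_(i <- r | P i) phi (F i) h.
Proof. exact: (big_morph (fun T => phi T h) (fun T T' => phiD T T' h) (phi0 h)). Qed.

Definition l1norm (T : S) : R := \sum_x \sum_a cabs (T (x, a)).

Lemma l1norm_ge0 T : 0 <= l1norm T.
Proof. by apply: sumr_ge0 => x _; apply: sumr_ge0 => a _; apply: cabs_ge0. Qed.

Lemma pnorm_phi_le (T : S) (h : H) : pnorm PK (phi T h) <= l1norm T * pnorm PH h.
Proof.
rewrite /l1norm /phi mulr_suml; apply: le_trans (pnorm_sum _ _ _ _) _.
apply: ler_sum => x _; rewrite mulr_suml; apply: le_trans (pnorm_sum _ _ _ _) _.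
apply: ler_sum => a _; rewrite pnormZ ler_wpM2l ?cabs_ge0 //.
exact/ler_wsqrtr/bU_contraction.
Qed.

End BlockIsometry.

Section Amplification.
Variables (R : realType) (X A : finType).
Local Notation C := (R[i]).
Local Notation S := (S1 R X A).
Variable U : boi R X A.
Local Notation H := (hspace (bH U)).
Local Notation PH := (hilbertPH (bH U)).
Local Notation PK := (hilbertPH (bK U)).

Definition ampl n (u : 'M[S]_n) : ('I_n -> H) -> 'I_n -> hspace (bK U) :=
  mxapply (fun i j => phi (u i j)).

Lemma ampl_normE n (u : 'M[S]_n) :
  ampl_norm U u = opnorm (fsqn PH) (fsqn PK) (ampl u).
Proof. by []. Qed.

Lemma ampl_norm_ge0 n (u : 'M[S]_n) : (0 <= ampl_norm U u)%E.
Proof. by rewrite ampl_normE opnorm_ge0. Qed.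

Lemma ampl_norm_le_l1 n (u : 'M[S]_n) :
  (ampl_norm U u <= (\sum_i \sum_j l1norm (u i j))%:E)%E.
Proof.
rewrite ampl_normE; apply: opnorm_le_sum => i j; first exact: l1norm_ge0.
exact: pnorm_phi_le.
Qed.

Lemma ampl_norm_fin_num n (u : 'M[S]_n) : ampl_norm U u \is a fin_num.
Proof.
rewrite ge0_fin_numE ?ampl_norm_ge0 //.
exact: le_lt_trans (ampl_norm_le_l1 u) (ltry _).
Qed.

Lemma fine_ampl_norm_ge0 n (u : 'M[S]_n) : 0 <= fine (ampl_norm U u).
Proof. exact/fine_ge0/ampl_norm_ge0. Qed.

Lemma ampl_norm_ub n (u : 'M[S]_n) (M : R) :
  (forall xi, fsqn PH xi <= 1 -> fnorm PK (ampl u xi) <= M) ->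
  (ampl_norm U u <= M%:E)%E.
Proof. by rewrite ampl_normE; apply: opnorm_ub. Qed.

Lemma fnorm_ampl_le n (u : 'M[S]_n) xi :
  fnorm PK (ampl u xi) <= fine (ampl_norm U u) * fnorm PH xi.
Proof.
have u_fin := ampl_norm_fin_num u; rewrite ampl_normE in u_fin *.
exact: (fnorm_mxapply_opnorm (fun i j => phi_lin (u i j)) u_fin).
Qed.

Lemma fsqn_ampl_le n (u : 'M[S]_n) xi :
  fsqn PK (ampl u xi) <= fine (ampl_norm U u) ^+ 2 * fsqn PH xi.
Proof.
have u_fin := ampl_norm_fin_num u; rewrite ampl_normE in u_fin *.
exact: (fsqn_mxapply_opnorm (fun i j => phi_lin (u i j)) u_fin).
Qed.

Lemma fnorm_ampl_unit n (u : 'M[S]_n) xi :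
  fsqn PH xi <= 1 -> fnorm PK (ampl u xi) <= fine (ampl_norm U u).
Proof.
have u_fin := ampl_norm_fin_num u; rewrite ampl_normE in u_fin *.
exact: (fnorm_mxapply_unit (fun i j => phi_lin (u i j)) u_fin).
Qed.

Lemma ampl0 n (u : 'M[S]_n) : ampl u 0 = 0.
Proof. exact: (mxapply0 (fun i j => phi_lin (u i j))). Qed.

Lemma ampl_scale n (c : C) (u : 'M[S]_n) xi : ampl (mx_scale c u) xi = c *: ampl u xi.
Proof.
apply: funext => i; rewrite /ampl /mxapply.
transitivity (c *: \sum_j phi (u i j) (xi j)); last by [].
by rewrite scaler_sumr; apply: eq_bigr => j _; rewrite mxE phiZ.
Qed.

Lemma amplD n (u v : 'M[S]_n) xi : ampl (u + v) xi = ampl u xi + ampl v xi.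
Proof.
apply: funext => i; rewrite /ampl /mxapply.
transitivity (\sum_j phi (u i j) (xi j) + \sum_j phi (v i j) (xi j)); last by [].
by rewrite -big_split; apply: eq_bigr => j _; rewrite mxE phiD.
Qed.

Lemma ampl_block n m (v : 'M[S]_n) (w : 'M[S]_m) xi1 xi2 :
  ampl (block_mx v 0 0 w) (fam_join xi1 xi2) = fam_join (ampl v xi1) (ampl w xi2).
Proof.
rewrite -[LHS]fam_joinE; congr fam_join; apply: funext => i;
  rewrite /= /ampl /mxapply big_split_ord /=.
  rewrite [X in _ + X]big1 ?addr0 => [|j _]; last by rewrite block_mxEur mxE phi0.
  by apply: eq_bigr => j _; rewrite block_mxEul fam_join_lshift.
rewrite [X in X + _]big1 ?add0r => [|j _]; last by rewrite block_mxEdl mxE phi0.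
by apply: eq_bigr => j _; rewrite block_mxEdr fam_join_rshift.
Qed.

Lemma ampl_mul3 n m (al : 'M[C]_(n, m)) (v : 'M[S]_m) (be : 'M[C]_(m, n)) xi :
  ampl (mx_mul3 al v be) xi = cmx_act al (ampl v (cmx_act be xi)).
Proof.
apply: funext => i; rewrite /ampl /mxapply /cmx_act.
transitivity (\sum_k \sum_l \sum_j (al i k * be l j) *: phi (v k l) (xi j)).
  under eq_bigr => j _ do rewrite mxE phi_sum; rewrite exchange_big /=.
  apply: eq_bigr => k _; under eq_bigr => j _ do rewrite phi_sum.
  by rewrite exchange_big; apply: eq_bigr => l _; apply: eq_bigr => j _; rewrite phiZ.
apply: eq_bigr => k _; rewrite scaler_sumr; apply: eq_bigr => l _.
rewrite (lin_sum (phi_lin (v k l))) scaler_sumr; apply: eq_bigr => j _.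
by rewrite (linZ (phi_lin (v k l))) !scalerA.
Qed.

Lemma ampl_norm_scale_le n (c : C) (u : 'M[S]_n) :
  (ampl_norm U (mx_scale c u) <= (cabs c * fine (ampl_norm U u))%:E)%E.
Proof.
apply: ampl_norm_ub => xi xi_le1; rewrite ampl_scale fnormZ.
by rewrite ler_wpM2l ?cabs_ge0 ?fnorm_ampl_unit.
Qed.

Lemma ampl_norm_add_le n (u v : 'M[S]_n) :
  (ampl_norm U (u + v) <= (fine (ampl_norm U u) + fine (ampl_norm U v))%:E)%E.
Proof.
apply: ampl_norm_ub => xi xi_le1; rewrite amplD.
by apply: le_trans (fnormD _ _ _) _; rewrite lerD ?fnorm_ampl_unit.
Qed.

Lemma ampl_norm_block n m (v : 'M[S]_n) (w : 'M[S]_m) :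
  ampl_norm U (block_mx v 0 0 w) = maxe (ampl_norm U v) (ampl_norm U w).
Proof.
have fnorm_block xi1 xi2 : fnorm PK (ampl (block_mx v 0 0 w) (fam_join xi1 xi2)) =
    Num.sqrt (fsqn PK (ampl v xi1) + fsqn PK (ampl w xi2)).
  by rewrite /fnorm ampl_block fsqn_fam_join.
apply/eqP; rewrite eq_le ge_max; apply/and3P; split.
- rewrite -(fineK (ampl_norm_fin_num v)) -(fineK (ampl_norm_fin_num w)) -EFin_max.
  apply: ampl_norm_ub => xi; rewrite -[xi]fam_joinE fsqn_fam_join fnorm_block => xi_le1.
  set M := Num.max _ _; have M_ge0 : 0 <= M by rewrite le_max fine_ampl_norm_ge0.
  have [vM wM] :
      fine (ampl_norm U v) ^+ 2 <= M ^+ 2 /\ fine (ampl_norm U w) ^+ 2 <= M ^+ 2.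
    by rewrite !lerXn2r ?nnegrE ?fine_ampl_norm_ge0 // !le_max !lexx ?orbT.
  rewrite -(ger0_norm M_ge0) -sqrtr_sqr; apply: ler_wsqrtr.
  apply: le_trans (lerD (fsqn_ampl_le v _) (fsqn_ampl_le w _)) _.
  apply: le_trans (lerD (ler_wpM2r (fsqn_ge0 _ _) vM) (ler_wpM2r (fsqn_ge0 _ _) wM)) _.
  by rewrite -mulrDr ler_piMr ?sqr_ge0.
- rewrite -(fineK (ampl_norm_fin_num (block_mx v 0 0 w))).
  apply: ampl_norm_ub => xi1 xi1_le1.
  have := @fnorm_ampl_unit _ (block_mx v 0 0 w) (fam_join xi1 0).
  by rewrite fnorm_block ampl0 !fsqn_fam_join !fsqn0 !addr0; apply.
- rewrite -(fineK (ampl_norm_fin_num (block_mx v 0 0 w))).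
  apply: ampl_norm_ub => xi2 xi2_le1.
  have := @fnorm_ampl_unit _ (block_mx v 0 0 w) (fam_join 0 xi2).
  by rewrite fnorm_block ampl0 !fsqn_fam_join !fsqn0 !add0r; apply.
Qed.

Lemma ampl_norm_mul3 n m (al : 'M[C]_(n, m)) (v : 'M[S]_m) (be : 'M[C]_(m, n)) :
  (ampl_norm U (mx_mul3 al v be) <=
   (fine (cmx_norm al) * fine (ampl_norm U v) * fine (cmx_norm be))%:E)%E.
Proof.
apply: ampl_norm_ub => xi xi_le1; rewrite ampl_mul3 -mulrA.
apply: le_trans (fnorm_cmx_act_le _ _ _) _.
rewrite ler_wpM2l ?fine_cmx_norm_ge0 //; apply: le_trans (fnorm_ampl_le _ _) _.
rewrite ler_wpM2l ?fine_ampl_norm_ge0 //; apply: le_trans (fnorm_cmx_act_le _ _ _) _.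
by apply: ler_piMr; rewrite ?fine_cmx_norm_ge0 // /fnorm -sqrtr1 ler_wsqrtr.
Qed.

End Amplification.

Definition separating (R : realType) (X A : finType) (Rs : boi R X A -> Prop) :=
  forall T : S1 R X A, T != 0 -> exists U, Rs U /\ exists h : hspace (bH U), phi T h != 0.

Lemma separating_inhabited (R : realType) (X A : finType) (Rs : boi R X A -> Prop) :
  (0 < #|X|)%N -> (0 < #|A|)%N -> separating Rs -> exists U, Rs U.
Proof.
move=> /card_gt0P [x _] /card_gt0P [a _] Rs_sep.
have ones_neq0 : [ffun=> 1] != 0 :> S1 R X A.
  by apply/eqP => /ffunP /(_ (x, a)); rewrite !ffunE => /eqP; rewrite oner_eq0.
by have [U [RsU _]] := Rs_sep _ ones_neq0; exists U.
Qed.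

Lemma mx_scaleK (R : realType) (V : lmodType R[i]) n (c : R[i]) (u : 'M[V]_n) :
  c != 0 -> mx_scale c^-1 (mx_scale c u) = u.
Proof. by move=> c_neq0; apply/matrixP => i j; rewrite !mxE scalerA mulVf ?scale1r. Qed.

Section ResourceNorm.
Variables (R : realType) (X A : finType).
Local Notation C := (R[i]).
Local Notation S := (S1 R X A).
Variable Rs : boi R X A -> Prop.

Lemma res_norm_lb U n (u : 'M[S]_n) : Rs U -> (ampl_norm U u <= res_norm Rs u)%E.
Proof. by move=> RsU; apply: ereal_sup_ubound; exists U. Qed.

Lemma res_norm_ub n (u : 'M[S]_n) M :
  (forall U, Rs U -> (ampl_norm U u <= M)%E) -> (res_norm Rs u <= M)%E.
Proof. by move=> uM; apply: ge_ereal_sup => _ [U RsU ->]; apply: uM. Qed.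

Hypothesis Rs_inhabited : exists U, Rs U.

Lemma res_norm_ge0 n (u : 'M[S]_n) : (0 <= res_norm Rs u)%E.
Proof.
have [U RsU] := Rs_inhabited.
exact: le_trans (ampl_norm_ge0 U u) (res_norm_lb u RsU).
Qed.

Lemma res_norm_fin_num n (u : 'M[S]_n) : res_norm Rs u \is a fin_num.
Proof.
rewrite ge0_fin_numE ?res_norm_ge0 //; apply: le_lt_trans (ltry _).
by apply: res_norm_ub => U _; apply: ampl_norm_le_l1.
Qed.

Lemma fine_ampl_norm_le U n (u : 'M[S]_n) : Rs U ->
  fine (ampl_norm U u) <= fine (res_norm Rs u).
Proof.
by move=> RsU; rewrite fine_le ?ampl_norm_fin_num ?res_norm_fin_num ?res_norm_lb.
Qed.

Lemma res_norm_scale_le n (c : C) (u : 'M[S]_n) :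
  (res_norm Rs (mx_scale c u) <= (cabs c * fine (res_norm Rs u))%:E)%E.
Proof.
apply: res_norm_ub => U RsU; apply: le_trans (ampl_norm_scale_le U c u) _.
by rewrite lee_fin ler_wpM2l ?cabs_ge0 ?fine_ampl_norm_le.
Qed.

Lemma res_norm_scale n (c : C) (u : 'M[S]_n) :
  res_norm Rs (mx_scale c u) = ((cabs c)%:E * res_norm Rs u)%E.
Proof.
rewrite -(fineK (res_norm_fin_num (mx_scale c u))) -(fineK (res_norm_fin_num u)) -EFinM.
congr EFin; apply/le_anti/andP; split.
  by rewrite -lee_fin fineK ?res_norm_fin_num ?res_norm_scale_le.
have [->|c_neq0] := eqVneq c 0; first by rewrite cabs0 mul0r fine_ge0 ?res_norm_ge0.
have le_inv := res_norm_scale_le c^-1 (mx_scale c u).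
rewrite mx_scaleK // -(fineK (res_norm_fin_num u)) lee_fin cabsV in le_inv.
by rewrite -ler_pdivlMl // lt_def cabs_eq0 c_neq0 cabs_ge0.
Qed.

Lemma res_norm_add n (u v : 'M[S]_n) :
  (res_norm Rs (u + v) <= res_norm Rs u + res_norm Rs v)%E.
Proof.
rewrite -(fineK (res_norm_fin_num u)) -(fineK (res_norm_fin_num v)) -EFinD.
apply: res_norm_ub => U RsU; apply: le_trans (ampl_norm_add_le U u v) _.
by rewrite lee_fin lerD ?fine_ampl_norm_le.
Qed.

Lemma res_norm_block n m (v : 'M[S]_n) (w : 'M[S]_m) :
  res_norm Rs (block_mx v 0 0 w) = maxe (res_norm Rs v) (res_norm Rs w).
Proof.
apply/eqP; rewrite eq_le ge_max; apply/and3P; split.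
- apply: res_norm_ub => U RsU; rewrite ampl_norm_block ge_max le_max le_max.
  by rewrite !res_norm_lb ?orbT.
- apply: res_norm_ub => U RsU; apply: le_trans (res_norm_lb _ RsU).
  by rewrite ampl_norm_block le_max lexx.
- apply: res_norm_ub => U RsU; apply: le_trans (res_norm_lb _ RsU).
  by rewrite ampl_norm_block le_max lexx orbT.
Qed.

Lemma res_norm_mul3 n m (al : 'M[C]_(n, m)) (v : 'M[S]_m) (be : 'M[C]_(m, n)) :
  (res_norm Rs (mx_mul3 al v be) <= cmx_norm al * res_norm Rs v * cmx_norm be)%E.
Proof.
rewrite -(fineK (cmx_norm_fin_num al)) -(fineK (cmx_norm_fin_num be)).
rewrite -(fineK (res_norm_fin_num v)) -!EFinM.
apply: res_norm_ub => U RsU; apply: le_trans (ampl_norm_mul3 U al v be) _.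
rewrite lee_fin ler_wpM2r ?fine_cmx_norm_ge0 //.
by rewrite ler_wpM2l ?fine_cmx_norm_ge0 ?fine_ampl_norm_le.
Qed.

Hypothesis Rs_sep : separating Rs.

Lemma res_norm_eq0 n (u : 'M[S]_n) : res_norm Rs u = 0%E -> u = 0.
Proof.
move=> u0; apply/matrixP => i j; rewrite mxE; apply/eqP/contraT => uij_neq0.
have [U [RsU [h phi_neq0]]] := Rs_sep uij_neq0.
suff : phi (u i j) h = 0 by move/eqP; rewrite (negbTE phi_neq0).
have U0 : ampl_norm U u = 0%E.
  by apply/le_anti; rewrite ampl_norm_ge0 -u0 res_norm_lb.
pose xi j' := if j' == j then h else 0.
have ampl_xi : ampl u xi i = phi (u i j) h.
  rewrite /ampl /mxapply (bigD1 j) //= /xi eqxx big1 ?addr0 // => j' /negbTE ->.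
  exact: lin0 (phi_lin (u i j')).
have := le_trans (psqn_le_fsqn _ _ i) (fsqn_ampl_le u xi).
rewrite U0 /= expr0n mul0r ampl_xi => phi_le0.
apply: (psqn_eq0 (P := hilbertPH (bK U))).
by apply/le_anti; rewrite phi_le0 psqn_ge0.
Qed.

End ResourceNorm.

Theorem proposition4p6 (R : realType) (X A : finType) (Rs : boi R X A -> Prop) :
  (0 < #|X|)%N -> (0 < #|A|)%N -> is_resource Rs ->
  operator_space_structure (res_norm Rs).
Proof.
move=> X_gt0 A_gt0 [_ Rs_sep].
have Rs_inhabited := separating_inhabited X_gt0 A_gt0 Rs_sep.
split; split.
- by move=> n u _; apply: res_norm_fin_num.
- by move=> n u _; apply: res_norm_eq0.
- by move=> n c u _; apply: res_norm_scale.
- by move=> n u v _; apply: res_norm_add.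
- by move=> n m v w _ _; apply: res_norm_block.
- by move=> n m al v be _ _; apply: res_norm_mul3.
Qed.
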